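(* Let $(X,\mathbf h,\Lambda,\widetilde B)$ be a quantum seed, $i\in[1,n]$, and let $X'_i$ be the cluster variable of $\mu_i(X,\mathbf h,\Lambda,\widetilde B)$ in position $i$. For every positive integer $s$, $$(X'_i)^s=V^s_{b^i}\,X(s[-b^i]_+-se_i)\qquad\text{and}\qquad (X'_i)^s=W^s_{b^i}\,X(s[b^i]_+-se_i),$$ where $$V^s_{b^i}=\prod_{k=1}^s\Big(\sum_{l=0}^{d_i}q^{\frac{2k-1}{2}l\tilde d_id_i^{-1}}h_{i,l}\,X(l\beta^i)\Big),\qquad W^s_{b^i}=\prod_{k=1}^s\Big(\sum_{l=0}^{d_i}q^{\frac{1-2k}{2}l\tilde d_id_i^{-1}}h_{i,l}\,X(-l\beta^i)\Big).$$
   Context: Notation: $[a,b]=\{a,a+1,\dots,b\}$; $[x]_+=\max(x,0)$, applied entrywise to vectors; $e_1,\dots,e_m$ is the standard basis of $\mathbb Z^m$. Fix integers $m\ge n\ge 1$. A compatible pair $(\Lambda,\widetilde B)$ consists of an $m\times n$ integer matrix $\widetilde B=(b_{kl})$ and a skew-symmetric $m\times m$ integer matrix $\Lambda$ such that $\Lambda\widetilde B=-\begin{bmatrix}D\\0\end{bmatrix}$ for some $D=\mathrm{diag}(\tilde d_1,\dots,\tilde d_n)$ with all $\tilde d_k\in\mathbb Z_{>0}$. Write $\Lambda(a,b)=a^T\Lambda b$. Fix positive integers $d_1,\dots,d_n$ such that $d_k$ divides every entry of the $k$-th column $b^k$ of $\widetilde B$; $\beta^k=\frac1{d_k}b^k$.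 The quantum torus $\mathcal T(\Lambda)$ is the $\mathbb Z[q^{\pm1/2}]$-algebra with basis $\{X(c)\mid c\in\mathbb Z^m\}$ and multiplication $X(c)X(d)=q^{\frac12\Lambda(c,d)}X(c+d)$; $\mathcal F$ is its skew field of fractions, $X_k=X(e_k)$. For $k\in[1,n]$, $\mathbf h_k=(h_{k,0},\dots,h_{k,d_k})$ with $h_{k,r}\in\mathbb Z[q^{\pm1/2}]$, $h_{k,r}=h_{k,d_k-r}$, $h_{k,0}=h_{k,d_k}=1$. A quantum seed $(X,\mathbf h,\Lambda,\widetilde B)$ consists of these data and the map $X:c\mapsto X(c)$. Its mutation in direction $i$ has cluster variables $X'_k=X_k$ for $k\ne i$ and $X'_i=\sum_{r=0}^{d_i}h_{i,r}X(r[\beta^i]_++(d_i-r)[-\beta^i]_+-e_i)$. *)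

(* Concrete model of the quantum torus T(Lambda) as a free
   Z[t^{+-1}]-module (t = q^{1/2}) with basis X(c), c in Z^m, given by finite
   formal sums; equality is equality of all coefficients. *)
From HB Require Import structures.
From mathcomp Require Import all_boot all_order all_algebra.
Set Implicit Arguments. Unset Strict Implicit. Unset Printing Implicit Defensive.
Import Order.TTheory GRing.Theory Num.Theory.
Local Open Scope ring_scope.

(* Elements of Z[q^{+-1/2}] : finite formal sums of (a, j) meaning a * t^j,
   t = q^{1/2}. *)
Definition laurent := seq (int * int).
Definition lcoef (h : laurent) (j : int) : int := \sum_(x <- h | x.2 == j) x.1.
Definition laurent_eq (h h' : laurent) : Prop := forall j, lcoef h j = lcoef h' j.
Definition laurent_one : laurent := [:: (1, 0)].

(* Elements of T(Lambda): finite formal sums of (a, j, c) meaning a t^j X(c). *)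
Definition qterm (m : nat) := (int * int * 'rV[int]_m)%type.
Definition qtor (m : nat) := seq (qterm m).
Definition qcoef m (p : qtor m) (j : int) (c : 'rV[int]_m) : int :=
  \sum_(x <- p | (x.1.2 == j) && (x.2 == c)) x.1.1.
Definition qt_eq m (p p' : qtor m) : Prop :=
  forall j c, qcoef p j c = qcoef p' j c.

Definition lam m (L : 'M[int]_m) (c d : 'rV[int]_m) : int := (c *m L *m d^T) 0 0.

(* multiplication X(c)X(d) = q^{Lambda(c,d)/2} X(c+d), extended bilinearly *)
Definition qmul m (L : 'M[int]_m) (p p' : qtor m) : qtor m :=
  [seq (x.1.1 * y.1.1, x.1.2 + y.1.2 + lam L x.2 y.2, x.2 + y.2) | x <- p, y <- p'].
Definition qone m : qtor m := [:: (1, 0, 0)].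
Definition qX m (c : 'rV[int]_m) : qtor m := [:: (1, 0, c)].
Definition qscal m (h : laurent) (j : int) (c : 'rV[int]_m) : qtor m :=
  [seq (x.1, x.2 + j, c) | x <- h].
Definition qpow m (L : 'M[int]_m) (p : qtor m) (s : nat) : qtor m :=
  iter s (qmul L p) (qone m).
Definition qprod m (L : 'M[int]_m) (ps : seq (qtor m)) : qtor m :=
  foldr (qmul L) (qone m) ps.

Definition pospart m (v : 'rV[int]_m) : 'rV[int]_m := map_mx (fun x => Num.max x 0) v.
(* standard basis vector e_i of Z^m, for i in [1,n] (0-indexed) *)
Definition evec m n (i : 'I_n) : 'rV[int]_m := \row_(k < m) (if (k : nat) == i then 1 else 0).
Definition bcol m n (B : 'M[int]_(m, n)) (l : 'I_n) : 'rV[int]_m := \row_(k < m) B k l.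
Definition beta m n (B : 'M[int]_(m, n)) (d : 'I_n -> nat) (l : 'I_n) : 'rV[int]_m :=
  \row_(k < m) (B k l %/ (d l)%:Z)%Z.

Definition compatible m n (L : 'M[int]_m) (B : 'M[int]_(m, n)) (dt : 'I_n -> int) : Prop :=
  L^T = - L /\ (forall l, 0 < dt l) /\
  (forall (k : 'I_m) (l : 'I_n), (L *m B) k l = if (k : nat) == l then - dt l else 0).

Definition good_d m n (B : 'M[int]_(m, n)) (d : 'I_n -> nat) : Prop :=
  (forall l, (0 < d l)%N) /\ (forall k l, ((d l)%:Z %| B k l)%Z).

Definition good_h n (d : 'I_n -> nat) (h : 'I_n -> nat -> laurent) : Prop :=
  forall k, [/\ forall r, (r <= d k)%N -> laurent_eq (h k r) (h k (d k - r)%N),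
              laurent_eq (h k 0) laurent_one & laurent_eq (h k (d k)) laurent_one].

Definition mut_var m n (B : 'M[int]_(m, n)) (d : 'I_n -> nat) (h : 'I_n -> nat -> laurent)
  (i : 'I_n) : qtor m :=
  flatten [seq qscal (h i r) 0
             (pospart (beta B d i) *+ r + pospart (- beta B d i) *+ (d i - r)%N - evec m i)
          | r <- iota 0 (d i).+1].

Definition Vfac m n (B : 'M[int]_(m, n)) (d : 'I_n -> nat) (dt : 'I_n -> int)
  (h : 'I_n -> nat -> laurent) (i : 'I_n) (k : nat) : qtor m :=
  flatten [seq qscal (h i l) (((2 * k%:Z - 1) * l%:Z * dt i) %/ (d i)%:Z)%Z (beta B d i *+ l)
          | l <- iota 0 (d i).+1].
Definition Wfac m n (B : 'M[int]_(m, n)) (d : 'I_n -> nat) (dt : 'I_n -> int)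
  (h : 'I_n -> nat -> laurent) (i : 'I_n) (k : nat) : qtor m :=
  flatten [seq qscal (h i l) (((1 - 2 * k%:Z) * l%:Z * dt i) %/ (d i)%:Z)%Z (- beta B d i *+ l)
          | l <- iota 0 (d i).+1].

Definition Vs m n (L : 'M[int]_m) B d dt h (i : 'I_n) (s : nat) : qtor m :=
  qprod L [seq Vfac B d dt h i k | k <- iota 1 s].
Definition Ws m n (L : 'M[int]_m) B d dt h (i : 'I_n) (s : nat) : qtor m :=
  qprod L [seq Wfac B d dt h i k | k <- iota 1 s].

(* Put beta := beta^i and rho := dt_i / d_i; rho is an integer because
   Lambda beta^T = - rho e_i^T (compatibility, divided by d_i).  With
   a := d_i [-beta]_+ - e_i, the mutation formula reads X'_i = Y_1 X(a), where
   Y_k := sum_l q^{(2k-1) l rho / 2} h_{i,l} X(l beta) is the k-th factor of V.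
   Since a_i = -1 and beta_i = 0, commuting X(a) past X(l beta) costs exactly
   q^{l rho}, so X(a) Y_k = Y_(k+1) X(a); as Lambda(a, a) = 0, induction on s
   gives (Y_1 X(a))^s = Y_1 ... Y_s X(s a).  The W-formula is the same argument
   with a' := d_i [beta]_+ - e_i and -beta in place of a and beta, after
   rewriting X'_i via the symmetry h_{i,r} = h_{i,d_i - r}. *)
From HB Require Import structures.
From mathcomp Require Import all_boot all_order all_algebra zify.
Set Implicit Arguments. Unset Strict Implicit. Unset Printing Implicit Defensive.
Import Order.TTheory GRing.Theory Num.Theory.
Local Open Scope ring_scope.

Lemma intMn (x : int) (k : nat) : x *+ k = x * k%:Z.
Proof. by rewrite -mulr_natr natz. Qed.

Section QuantumTorus.
Variables (m : nat) (L : 'M[int]_m).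

Lemma lamDl u u' v : lam L (u + u') v = lam L u v + lam L u' v.
Proof. by rewrite /lam !mulmxDl !mxE. Qed.

Lemma lamDr u v v' : lam L u (v + v') = lam L u v + lam L u v'.
Proof. by rewrite /lam linearD /= !mulmxDr !mxE. Qed.

Lemma lam0l v : lam L 0 v = 0.
Proof. by rewrite /lam !mul0mx mxE. Qed.

Lemma lam0r v : lam L v 0 = 0.
Proof. by rewrite /lam linear0 mulmx0 mxE. Qed.

Lemma lamNl u v : lam L (- u) v = - lam L u v.
Proof. by apply/eqP; rewrite -subr_eq0 opprK -lamDl addNr lam0l. Qed.

Lemma lamNr u v : lam L u (- v) = - lam L u v.
Proof. by apply/eqP; rewrite -subr_eq0 opprK -lamDr addNr lam0r. Qed.

Lemma lamMnl u v k : lam L (u *+ k) v = lam L u v *+ k.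
Proof. by elim: k => [|k IH]; rewrite ?mulr0n ?lam0l // !mulrS lamDl IH. Qed.

Lemma lamMnr u v k : lam L u (v *+ k) = lam L u v *+ k.
Proof. by elim: k => [|k IH]; rewrite ?mulr0n ?lam0r // !mulrS lamDr IH. Qed.

Definition qterm_mul (x y : qterm m) : qterm m :=
  (x.1.1 * y.1.1, x.1.2 + y.1.2 + lam L x.2 y.2, x.2 + y.2).

Lemma qterm_mulA x y z :
  qterm_mul (qterm_mul x y) z = qterm_mul x (qterm_mul y z).
Proof. by rewrite /qterm_mul /= lamDl lamDr mulrA !addrA; congr (_, _, _); lia. Qed.

Lemma qmul_cons x p q : qmul L (x :: p) q = map (qterm_mul x) q ++ qmul L p q.
Proof. by []. Qed.

Lemma qmul_catl p p' q : qmul L (p ++ p') q = qmul L p q ++ qmul L p' q.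
Proof. by elim: p => [//|x p IH]; rewrite cat_cons !qmul_cons IH catA. Qed.

Lemma qmul_seq1 p y : qmul L p [:: y] = map (qterm_mul^~ y) p.
Proof. by elim: p => [//|x p IH]; rewrite qmul_cons IH. Qed.

Lemma qmulA p q r : qmul L (qmul L p q) r = qmul L p (qmul L q r).
Proof.
have map_qmul x q' : qmul L (map (qterm_mul x) q') r = map (qterm_mul x) (qmul L q' r).
  elim: q' => [//|y q' IH]; rewrite /= qmul_cons IH map_cat -map_comp.
  by congr (_ ++ _); apply: eq_map => z /=; rewrite qterm_mulA.
by elim: p => [//|x p IH]; rewrite !qmul_cons qmul_catl map_qmul IH.
Qed.

Lemma qterm_mul_coefr x y j c :
  (if ((qterm_mul x y).1.2 == j) && ((qterm_mul x y).2 == c)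
   then (qterm_mul x y).1.1 else 0) =
  x.1.1 * (if (y.1.2 == j - x.1.2 - lam L x.2 (c - x.2)) && (y.2 == c - x.2)
           then y.1.1 else 0).
Proof.
rewrite /qterm_mul /=.
have -> : (x.2 + y.2 == c) = (y.2 == c - x.2).
  by rewrite [RHS]eq_sym subr_eq eq_sym addrC.
have [->|_] := eqVneq y.2 (c - x.2); last by rewrite !andbF mulr0.
have -> : (x.1.2 + y.1.2 + lam L x.2 (c - x.2) == j) =
          (y.1.2 == j - x.1.2 - lam L x.2 (c - x.2)).
  by apply/eqP/eqP; lia.
by case: ifP; rewrite ?mulr0.
Qed.

Lemma qterm_mul_coefl x y j c :
  (if ((qterm_mul x y).1.2 == j) && ((qterm_mul x y).2 == c)
   then (qterm_mul x y).1.1 else 0) =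
  (if (x.1.2 == j - y.1.2 - lam L (c - y.2) y.2) && (x.2 == c - y.2)
   then x.1.1 else 0) * y.1.1.
Proof.
rewrite /qterm_mul /=.
have -> : (x.2 + y.2 == c) = (x.2 == c - y.2).
  by rewrite [RHS]eq_sym subr_eq eq_sym.
have [->|_] := eqVneq x.2 (c - y.2); last by rewrite !andbF mul0r.
have -> : (x.1.2 + y.1.2 + lam L (c - y.2) y.2 == j) =
          (x.1.2 == j - y.1.2 - lam L (c - y.2) y.2).
  by apply/eqP/eqP; lia.
by case: ifP; rewrite ?mul0r.
Qed.

Lemma qcoef_qmulr p r j c : qcoef (qmul L p r) j c =
  \sum_(x <- p) x.1.1 * qcoef r (j - x.1.2 - lam L x.2 (c - x.2)) (c - x.2).
Proof.
rewrite /qcoef /qmul big_flatten big_map; apply: eq_bigr => x _.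
rewrite big_map big_mkcond [X in _ * X]big_mkcond big_distrr /=.
by apply: eq_bigr => y _; apply: qterm_mul_coefr.
Qed.

Lemma qcoef_qmull p r j c : qcoef (qmul L p r) j c =
  \sum_(y <- r) qcoef p (j - y.1.2 - lam L (c - y.2) y.2) (c - y.2) * y.1.1.
Proof.
rewrite /qcoef /qmul big_flatten big_map.
under eq_bigr => x _ do
  rewrite big_map big_mkcond (eq_bigr _ (fun y _ => qterm_mul_coefl x y j c)).
under [RHS]eq_bigr => y _ do rewrite big_mkcond big_distrl.
by rewrite exchange_big.
Qed.

Lemma qmul_congl p p' r : qt_eq p p' -> qt_eq (qmul L p r) (qmul L p' r).
Proof. by move=> E j c; rewrite !qcoef_qmull; apply: eq_bigr => y _; rewrite E. Qed.

Lemma qmul_congr p r r' : qt_eq r r' -> qt_eq (qmul L p r) (qmul L p r').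
Proof. by move=> E j c; rewrite !qcoef_qmulr; apply: eq_bigr => x _; rewrite E. Qed.

Lemma qpow_cong p p' s : qt_eq p p' -> qt_eq (qpow L p s) (qpow L p' s).
Proof.
move=> E; elim: s => [//|s IH] j c /=.
by rewrite (qmul_congl _ E) (qmul_congr _ IH).
Qed.

Lemma qcoef_flatten_qscal (H : nat -> laurent) (v : nat -> 'rV[int]_m) s j c :
  qcoef (flatten [seq qscal (H r) 0 (v r) | r <- s]) j c =
  \sum_(r <- s) (if v r == c then lcoef (H r) j else 0).
Proof.
rewrite /qcoef big_flatten big_map; apply: eq_bigr => r _.
rewrite /qscal big_map /lcoef /=; case: eqP => _.
  by apply: eq_bigl => x /=; rewrite addr0 andbT.
by rewrite big_pred0 // => x; rewrite andbF.
Qed.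

End QuantumTorus.

Section TwistedPower.
Variables (m : nat) (L : 'M[int]_m) (Y : nat -> qtor m) (a : 'rV[int]_m).
Hypothesis lam_aa : lam L a a = 0.
Hypothesis qX_Y_shift : forall k, qmul L (qX a) (Y k) = qmul L (Y k.+1) (qX a).

Lemma qprod_cons p ps : qprod L (p :: ps) = qmul L p (qprod L ps).
Proof. by []. Qed.

Lemma qX_qprod_shift s k0 :
  qmul L (qX a) (qprod L [seq Y k | k <- iota k0 s]) =
  qmul L (qprod L [seq Y k | k <- iota k0.+1 s]) (qX a).
Proof.
elim: s k0 => [|s IH] k0.
  by rewrite /= /qmul /qone /qX /= lam0l lam0r !mulr1 !addr0 add0r.
by rewrite [iota k0 _]/= [iota k0.+1 _]/= !map_cons !qprod_cons
  -qmulA qX_Y_shift !qmulA IH.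
Qed.

Lemma qX_mul_qXMn s : qmul L (qX a) (qX (a *+ s)) = qX (a *+ s.+1).
Proof. by rewrite /qmul /qX /= lamMnr lam_aa mul0rn mulr1 !addr0 mulrS. Qed.

Lemma qpow_twisted s : qpow L (qmul L (Y 1) (qX a)) s =
  qmul L (qprod L [seq Y k | k <- iota 1 s]) (qX (a *+ s)).
Proof.
elim: s => [|s IH]; first by rewrite /= /qmul /qone /qX /= lam0l mulr1 !addr0.
rewrite [LHS]/= -/(qpow L _ s) IH [iota 1 _]/= map_cons qprod_cons.
rewrite qmulA -(qmulA _ (qX a)) qX_qprod_shift (qmulA _ _ (qX a)) qX_mul_qXMn.
by rewrite qmulA.
Qed.

End TwistedPower.

Section MutationPower.
Variables (m n : nat) (hnm : (n <= m)%N) (L : 'M[int]_m) (B : 'M[int]_(m, n))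
  (dt : 'I_n -> int) (d : 'I_n -> nat) (h : 'I_n -> nat -> laurent) (i : 'I_n).
Hypotheses (hcomp : compatible L B dt) (hd : good_d B d).

Let i' : 'I_m := widen_ord hnm i.
Let bet := beta B d i.
Let rho := - (L *m bet^T) i' 0.

Lemma d_gt0 : 0 < (d i)%:Z.
Proof. by case: hd => /(_ i); lia. Qed.

Lemma bcolE : bcol B i = bet *+ d i.
Proof.
apply/rowP => k; rewrite !mxE mulmxnE !mxE intMn divzK //.
by case: hd => _; apply.
Qed.

Lemma L_betM_d k : (L *m bet^T) k 0 * (d i)%:Z = if k == i' then - dt i else 0.
Proof.
case: hcomp => _ [_ <-]; rewrite !mxE big_distrl /=.
apply: eq_bigr => j _; rewrite !mxE -mulrA divzK //.
by case: hd => _; apply.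
Qed.

Lemma dtE : dt i = rho * (d i)%:Z.
Proof. by have := L_betM_d i'; rewrite eqxx mulNr => ->; rewrite opprK. Qed.

Lemma L_bet_eq0 k : k != i' -> (L *m bet^T) k 0 = 0.
Proof.
move=> /negPf ki; have /eqP := L_betM_d k; rewrite ki mulf_eq0 => /orP[/eqP //|].
by have := d_gt0; lia.
Qed.

Lemma lam_beta u : lam L u bet = u 0 i' * - rho.
Proof.
rewrite /lam -mulmxA mxE (bigD1 i') //= big1 ?addr0 ?opprK // => k ki.
by rewrite L_bet_eq0 // mulr0.
Qed.

Lemma lamC u v : lam L v u = - lam L u v.
Proof.
case: hcomp => Lskew _.
rewrite /lam; transitivity (((v *m L *m u^T)^T) 0 0); first by rewrite [RHS]mxE.
by rewrite !trmx_mul trmxK Lskew mulmxA mulmxN mulNmx mxE.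
Qed.

Lemma lam_betal u : lam L bet u = u 0 i' * rho.
Proof. by rewrite lamC lam_beta mulrN opprK. Qed.

Lemma lam_diag u : lam L u u = 0.
Proof. by have := lamC u u; lia. Qed.

Lemma rho_gt0 : 0 < rho.
Proof. by case: hcomp => _ [/(_ i) + _]; rewrite dtE; have := d_gt0; nia. Qed.

Lemma beta_i' : bet 0 i' = 0.
Proof. by have := lam_diag bet; rewrite lam_beta; have := rho_gt0; nia. Qed.

Lemma exponent_divE (z : int) : ((z * dt i) %/ (d i)%:Z)%Z = z * rho.
Proof. by rewrite dtE mulrA mulzK //; have := d_gt0; lia. Qed.

Lemma pospartMn_sub_evec_i' (u : 'rV[int]_m) : u 0 i' = 0 -> (pospart u *+ d i - evec m i) 0 i' = -1.
Proof. by move=> u0; rewrite !mxE mulmxnE !mxE u0 /= eqxx intMn; lia. Qed.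

Let aV := pospart (- bet) *+ d i - evec m i.
Let aW := pospart bet *+ d i - evec m i.

Lemma aV_i' : aV 0 i' = -1.
Proof. by apply: pospartMn_sub_evec_i'; rewrite mxE beta_i' oppr0. Qed.

Lemma aW_i' : aW 0 i' = -1.
Proof. exact: pospartMn_sub_evec_i' beta_i'. Qed.

Lemma qX_Vfac_shift k :
  qmul L (qX aV) (Vfac B d dt h i k) = qmul L (Vfac B d dt h i k.+1) (qX aV).
Proof.
rewrite /qX qmul_cons cats0 qmul_seq1 /Vfac !map_flatten -!map_comp.
congr flatten; apply: eq_map => l /=; rewrite /qscal -!map_comp; apply: eq_map => x /=.
rewrite /qterm_mul /= !exponent_divE lamMnr lamMnl lam_beta lam_betal aV_i' !intMn.
by congr (_, _, _); [rewrite mul1r mulr1 | nia | rewrite addrC].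
Qed.

Lemma mut_var_Vfac : mut_var B d h i = qmul L (Vfac B d dt h i 1) (qX aV).
Proof.
rewrite /mut_var qmul_seq1 /Vfac map_flatten -map_comp; congr flatten.
apply/eq_in_map => r; rewrite mem_iota => /andP[_ r_le] /=.
rewrite /qscal -map_comp; apply: eq_map => x /=.
rewrite /qterm_mul /= exponent_divE lamMnl lam_betal aV_i' !intMn.
congr (_, _, _); [by rewrite mulr1 | nia |].
by apply/rowP => k; rewrite !mxE !mulmxnE !mxE !intMn; nia.
Qed.

Lemma qX_Wfac_shift k :
  qmul L (qX aW) (Wfac B d dt h i k) = qmul L (Wfac B d dt h i k.+1) (qX aW).
Proof.
rewrite /qX qmul_cons cats0 qmul_seq1 /Wfac !map_flatten -!map_comp.
congr flatten; apply: eq_map => l /=; rewrite /qscal -!map_comp; apply: eq_map => x /=.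
rewrite /qterm_mul /= !exponent_divE !(lamMnr, lamMnl, lamNr, lamNl).
rewrite lam_beta lam_betal aW_i' !intMn.
by congr (_, _, _); [rewrite mul1r mulr1 | nia | rewrite addrC].
Qed.

Lemma Wfac1_qX : qmul L (Wfac B d dt h i 1) (qX aW) =
  flatten [seq qscal (h i l) 0 (aW - bet *+ l) | l <- iota 0 (d i).+1].
Proof.
rewrite qmul_seq1 /Wfac map_flatten -map_comp; congr flatten.
apply: eq_map => l /=; rewrite /qscal -map_comp; apply: eq_map => x /=.
rewrite /qterm_mul /= exponent_divE !(lamMnl, lamNl) lam_betal aW_i' !intMn.
by congr (_, _, _); [rewrite mulr1 | nia | rewrite addrC mulNrn].
Qed.

Lemma mut_var_revE : mut_var B d h i =
  flatten [seq qscal (h i r) 0 (aW - bet *+ (d i - r)) | r <- iota 0 (d i).+1].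
Proof.
rewrite /mut_var; congr flatten; apply/eq_in_map => r.
rewrite mem_iota => /andP[_ r_le] /=; congr qscal.
by apply/rowP => k; rewrite !mxE !mulmxnE !mxE !intMn; nia.
Qed.

Lemma mut_var_Wfac : good_h d h ->
  qt_eq (mut_var B d h i) (qmul L (Wfac B d dt h i 1) (qX aW)).
Proof.
move=> hh j c; rewrite Wfac1_qX mut_var_revE !qcoef_flatten_qscal.
set F := fun l => if aW - bet *+ l == c then lcoef (h i l) j else 0.
rewrite (eq_big_seq (fun r => F (d i - r)%N)); last first.
  move=> r; rewrite mem_iota => /andP[_ r_le]; case: (hh i) => hsym _ _.
  by rewrite /F hsym.
change (\sum_(0 <= r < (d i).+1) F (d i - r)%N = \sum_(0 <= l < (d i).+1) F l).
by rewrite big_nat_rev /=; apply: eq_big_nat => r r_lt; congr F; lia.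
Qed.

Lemma pospartN_bcol_subMn s :
  pospart (- bcol B i) *+ s - evec m i *+ s = aV *+ s.
Proof.
rewrite bcolE; apply/rowP => k; rewrite !mxE !mulmxnE !mxE !mulmxnE !mxE !intMn.
by have := d_gt0; nia.
Qed.

Lemma pospart_bcol_subMn s :
  pospart (bcol B i) *+ s - evec m i *+ s = aW *+ s.
Proof.
rewrite bcolE; apply/rowP => k; rewrite !mxE !mulmxnE !mxE !mulmxnE !mxE !intMn.
by have := d_gt0; nia.
Qed.

Lemma qpow_mut_var_Vs s : qt_eq (qpow L (mut_var B d h i) s)
  (qmul L (Vs L B d dt h i s) (qX (pospart (- bcol B i) *+ s - evec m i *+ s))).
Proof.
by rewrite mut_var_Vfac pospartN_bcol_subMn (qpow_twisted (lam_diag _) qX_Vfac_shift).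
Qed.

Lemma qpow_mut_var_Ws s : good_h d h -> qt_eq (qpow L (mut_var B d h i) s)
  (qmul L (Ws L B d dt h i s) (qX (pospart (bcol B i) *+ s - evec m i *+ s))).
Proof.
move=> hh j c; rewrite pospart_bcol_subMn (qpow_cong _ s (mut_var_Wfac hh) j c).
by rewrite (qpow_twisted (lam_diag _) qX_Wfac_shift).
Qed.

End MutationPower.

Theorem lemma4p1 (m n : nat) (hn : (1 <= n)%N) (hnm : (n <= m)%N)
  (L : 'M[int]_m) (B : 'M[int]_(m, n)) (dt : 'I_n -> int)
  (d : 'I_n -> nat) (h : 'I_n -> nat -> laurent)
  (hcomp : compatible L B dt) (hd : good_d B d) (hh : good_h d h)
  (i : 'I_n) (s : nat) (hs : (0 < s)%N) :
  qt_eq (qpow L (mut_var B d h i) s)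
        (qmul L (Vs L B d dt h i s)
           (qX (pospart (- bcol B i) *+ s - evec m i *+ s)))
  /\
  qt_eq (qpow L (mut_var B d h i) s)
        (qmul L (Ws L B d dt h i s)
           (qX (pospart (bcol B i) *+ s - evec m i *+ s))).
Proof.
by split; [apply: qpow_mut_var_Vs | apply: qpow_mut_var_Ws].
Qed.
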